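(* Let $\beta>0$, $n\ge1$, and let $V\in\mathbb R^{d\times d}$ be real symmetric with orthonormal eigenbasis $(e_k)_{k=1}^d$ and eigenvalues $(\lambda_k)_{k=1}^d$. Consider the system on $(\mathbb S^{d-1})^n$ \[ \dot x_i=P^\perp_{x_i}\Big(\frac1{Z_i}\sum_{j=1}^n e^{\beta\langle x_i,Vx_j\rangle}Vx_j\Big),\qquad Z_i=\sum_{k=1}^n e^{\beta\langle x_i,Vx_k\rangle}, \] and fix $p\in[d]$. The homogeneous configuration $x_i^*=e_p$ for all $i\in[n]$ is an equilibrium. It is linearly asymptotically stable if $\lambda_p>0$ and $\lambda_k<\lambda_p$ for all $k\neq p$. It is linearly unstable if either $\lambda_p<0$ or $\lambda_k>\lambda_p$ for some $k\neq p$.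
   Context: $P^\perp_xy=y-\langle x,y\rangle x$ is the projection onto the tangent space $T_x\mathbb S^{d-1}$. Linear stability refers to the linearization of the vector field at the equilibrium on the tangent space $T_{x^*}(\mathbb S^{d-1})^n$ (tangent perturbations $x_i=(x_i^*+y_i)/\|x_i^*+y_i\|$ with $\langle y_i,x_i^*\rangle=0$): linearly asymptotically stable means all eigenvalues of this linearization have negative real part; linearly unstable means it has an eigenvalue with positive real part. *)

From mathcomp Require Import all_boot all_algebra all_classical all_reals all_analysis.
From mathcomp Require Import complex.
Import GRing.Theory Num.Theory.
Set Implicit Arguments. Unset Strict Implicit. Unset Printing Implicit Defensive.
Local Open Scope ring_scope.

(* Points of R^d are row vectors 'rV[R]_d; a configuration (x_1,...,x_n) of
   n points is the n x d matrix whose i-th row is x_i. *)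

Definition dotv (R : realType) (d : nat) (x y : 'rV[R]_d) : R := (x *m y^T) 0 0.

Definition projT (R : realType) (d : nat) (x y : 'rV[R]_d) : 'rV[R]_d :=
  y - dotv x y *: x.

(* The vector V x (as a row vector: (V x)^T = x^T V^T). *)
Definition Vapp (R : realType) (d : nat) (V : 'M[R]_d) (x : 'rV[R]_d) : 'rV[R]_d :=
  x *m V^T.

Definition Zpart (R : realType) (n d : nat) (beta : R) (V : 'M[R]_d)
    (X : 'M[R]_(n, d)) (i : 'I_n) : R :=
  \sum_(k < n) expR (beta * dotv (row i X) (Vapp V (row k X))).

Definition attn_field (R : realType) (n d : nat) (beta : R) (V : 'M[R]_d)
    (X : 'M[R]_(n, d)) : 'M[R]_(n, d) :=
  \matrix_(i < n)
    projT (row i X)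
      ((Zpart beta V X i)^-1 *:
         \sum_(j < n) (expR (beta * dotv (row i X) (Vapp V (row j X))) *:
                         Vapp V (row j X))).

Definition Xstar (R : realType) (n d : nat) (e : 'I_d -> 'rV[R]_d) (p : 'I_d)
  : 'M[R]_(n, d) := \matrix_(i < n) e p.

(* Coordinates on the tangent space T_{x*}(S^{d-1})^n: the orthonormal basis
   e_k (k <> p) of T_{e_p} S^{d-1}, indexed by lift p j, j : 'I_d.-1, in each
   of the n factors. *)
Definition chart_pt (R : realType) (n d : nat) (e : 'I_d -> 'rV[R]_d) (p : 'I_d)
    (c : 'I_n -> 'I_d.-1 -> R) : 'M[R]_(n, d) :=
  \matrix_(i < n)
    let w := e p + \sum_(j < d.-1) (c i j *: e (lift p j)) in
    (Num.sqrt (dotv w w))^-1 *: w.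

(* The vector field expressed in the chart coordinates y: since
   <y_i, e_p> = 0, y_i = x_i / <x_i,e_p> - e_p, so the (i, lift p j)
   coordinate of y_i is <x_i,e_k>/<x_i,e_p> (k = lift p j), whose time
   derivative along xdot = F(x) is
   (<F_i,e_k><x_i,e_p> - <x_i,e_k><F_i,e_p>) / <x_i,e_p>^2. *)
Definition chart_field (R : realType) (n d : nat) (beta : R) (V : 'M[R]_d)
    (e : 'I_d -> 'rV[R]_d) (p : 'I_d) (c : 'I_n -> 'I_d.-1 -> R)
    (ij : 'I_n * 'I_d.-1) : R :=
  let X := chart_pt e p c in
  let F := attn_field beta V X in
  let xi := row ij.1 X in
  let Fi := row ij.1 F in
  let ek := e (lift p ij.2) in
  (dotv Fi ek * dotv xi (e p) - dotv xi ek * dotv Fi (e p)) / (dotv xi (e p)) ^+ 2.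

(* Index type of the tangent coordinates and the Jacobian at y = 0 of the
   chart vector field (the linearization on T_{x*}(S^{d-1})^n), as a square
   matrix of size n(d-1) = #|'I_n * 'I_d.-1|. *)
Definition tidx (n d : nat) := ('I_n * 'I_d.-1)%type.

Definition linearization (R : realType) (n d : nat) (beta : R) (V : 'M[R]_d)
    (e : 'I_d -> 'rV[R]_d) (p : 'I_d) : 'M[R]_(#|{: tidx n d}|) :=
  \matrix_(a, b)
    derive1 (fun t : R =>
      chart_field beta V e p
        (fun i j => if (i, j) == enum_val b then t else 0) (enum_val a)) 0.

Definition cplx_eigenvalue (R : realType) (N : nat) (A : 'M[R]_N) (z : R[i]) : Prop :=
  eigenvalue (map_mx (fun x => (x%:C)%C) A) z.

Definition lin_asymp_stable (R : realType) (N : nat) (A : 'M[R]_N) : Prop :=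
  forall z : R[i], cplx_eigenvalue A z -> complex.Re z < 0.

Definition lin_unstable (R : realType) (N : nat) (A : 'M[R]_N) : Prop :=
  exists z : R[i], cplx_eigenvalue A z /\ 0 < complex.Re z.

(* At the homogeneous configuration a tangent perturbation y_i of x_i = e_p
   changes <x_i, V x_j> only to second order, so the softmax weights stay
   uniform to first order and beta drops out of the linearization.  In the
   chart coordinates the linearization decouples over the directions e_k,
   k <> p, acting on each as y_i |-> (lam_k / n) sum_j y_j - lam_p y_i.  Its
   eigenvalues are lam_k - lam_p, on synchronous perturbations, and -lam_p, on
   perturbations with sum_i y_i = 0 (which exist when n >= 2); both claims
   follow from their signs.  A Jacobian entry is computed by restricting the
   chart field to a coordinate line: there the configuration stays in the
   plane spanned by e_p and e_k, and the field factors as t * g(t) with g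
   continuous at 0. *)

From mathcomp Require Import all_boot all_algebra all_classical all_reals all_analysis.
From mathcomp Require Import complex.
From mathcomp Require Import ring.
Import GRing.Theory Num.Theory numFieldNormedType.Exports.
Set Implicit Arguments. Unset Strict Implicit. Unset Printing Implicit Defensive.
Local Open Scope classical_set_scope.
Local Open Scope ring_scope.

Section MeanFieldMatrix.
Variables (K : fieldType) (n m : nat).
Local Notation idx := ('I_n * 'I_m)%type.

Definition rV_of (f : 'I_n -> 'I_m -> K) : 'rV[K]_#|{: idx}| :=
  \row_a f (enum_val a).1 (enum_val a).2.

Lemma rV_ofE f i j : rV_of f 0 (enum_rank (i, j)) = f i j.
Proof. by rewrite mxE enum_rankK. Qed.

Lemma rV_of_coords (v : 'rV[K]_#|{: idx}|) :
  rV_of (fun i j => v 0 (enum_rank (i, j))) = v.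
Proof. by apply/rowP => a; rewrite mxE -surjective_pairing enum_valK. Qed.

Lemma eq_rV_of f g : (forall i j, f i j = g i j) -> rV_of f = rV_of g.
Proof. by move=> fg; apply/rowP => a; rewrite !mxE fg. Qed.

Lemma scale_rV_of z f : z *: rV_of f = rV_of (fun i j => z * f i j).
Proof. by apply/rowP => a; rewrite !mxE. Qed.

Lemma rV_of_neq0 f i j : f i j != 0 -> rV_of f != 0.
Proof. by apply: contraNneq => f0; rewrite -rV_ofE f0 mxE. Qed.

Definition meanfield_mx (mu : 'I_m -> K) (nu : K) : 'M[K]_#|{: idx}| :=
  \matrix_(a, b) (((enum_val b).2 == (enum_val a).2)%:R *
     (mu (enum_val b).2 / n%:R - ((enum_val a).1 == (enum_val b).1)%:R * nu)).

Variables (mu : 'I_m -> K) (nu : K).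

Lemma meanfield_mxE i j i0 j0 :
  meanfield_mx mu nu (enum_rank (i, j)) (enum_rank (i0, j0)) =
  (j0 == j)%:R * (mu j0 / n%:R - (i == i0)%:R * nu).
Proof. by rewrite mxE !enum_rankK. Qed.

Lemma mulmx_meanfield f : rV_of f *m meanfield_mx mu nu =
  rV_of (fun i0 j0 => mu j0 / n%:R * \sum_i f i j0 - nu * f i0 j0).
Proof.
apply/rowP => b; rewrite -[b]enum_valK; case: (enum_val b) => i0 j0.
rewrite rV_ofE mxE (reindex (@enum_rank idx)) /=; last first.
  by apply: onW_bij; exact: enum_rank_bij.
pose F x := rV_of f 0 (enum_rank x) * meanfield_mx mu nu (enum_rank x) (enum_rank (i0, j0)).
rewrite (eq_bigr (fun x => F (x.1, x.2))); last by case.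
rewrite -(pair_big xpredT xpredT (fun i j => F (i, j))) /= {}/F.
under eq_bigr => i _.
  rewrite (bigD1 j0) //= big1 => [|j /negbTE jj0]; last first.
    by rewrite meanfield_mxE eq_sym jj0 mul0r mulr0.
  rewrite rV_ofE meanfield_mxE eqxx mul1r addr0 mulrBr.
  over.
rewrite sumrB mulr_sumr; congr (_ - _); first by apply: eq_bigr => i _; rewrite mulrC.
rewrite (bigD1 i0) //= big1 => [|i /negbTE ii0]; last by rewrite ii0 mul0r mulr0.
by rewrite eqxx mul1r addr0 mulrC.
Qed.

Lemma sumr_delta (I : finType) (i1 : I) : \sum_i (i == i1)%:R = 1 :> K.
Proof. by rewrite (bigD1 i1) //= eqxx big1 ?addr0 // => i /negbTE ->. Qed.

Lemma eigenvalue_meanfield_split (j : 'I_m) (i1 i2 : 'I_n) : i1 != i2 ->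
  eigenvalue (meanfield_mx mu nu) (- nu).
Proof.
move=> i12; pose f i j' := (j' == j)%:R * ((i == i1)%:R - (i == i2)%:R) : K.
apply/eigenvalueP; exists (rV_of f); last first.
  by apply: (rV_of_neq0 (i := i1) (j := j)); rewrite /f !eqxx (negbTE i12) subr0 mulr1 oner_eq0.
rewrite mulmx_meanfield scale_rV_of; apply: eq_rV_of => i0 j0.
by rewrite /f -mulr_sumr sumrB !sumr_delta subrr !mulr0 sub0r mulNr.
Qed.

Hypothesis n_neq0 : n%:R != 0 :> K.

Lemma eigenvalue_meanfield_sync (j : 'I_m) : eigenvalue (meanfield_mx mu nu) (mu j - nu).
Proof.
have n_gt0 : (0 < n)%N by rewrite lt0n; apply: contraNneq n_neq0 => ->.
apply/eigenvalueP; exists (rV_of (fun _ j' => (j' == j)%:R)); last first.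
  by apply: (rV_of_neq0 (i := Ordinal n_gt0) (j := j)); rewrite eqxx oner_eq0.
rewrite mulmx_meanfield scale_rV_of; apply: eq_rV_of => i j0.
rewrite sumr_const card_ord; case: eqVneq => [->|_]; rewrite ?mulr0n ?mulr1n.
  by field.
by rewrite mul0rn !mulr0 subrr.
Qed.

Lemma meanfield_eigenvalue z : eigenvalue (meanfield_mx mu nu) z ->
  z = - nu \/ exists j, z = mu j - nu.
Proof.
move=> /eigenvalueP [v]; rewrite -(rV_of_coords v).
set f := fun i j => _; rewrite mulmx_meanfield scale_rV_of => /rowP eq_v v_neq0.
have eig i j : mu j / n%:R * \sum_i' f i' j = (z + nu) * f i j.
  by have := eq_v (enum_rank (i, j)); rewrite !rV_ofE mulrDl => <-; rewrite subrK.
have sum_eig j : mu j * \sum_i f i j = (z + nu) * \sum_i f i j.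
  rewrite [RHS]mulr_sumr -(eq_bigr _ (fun i _ => eig i j)) sumr_const card_ord.
  by rewrite -[(_ * _) *+ _]mulr_natr; field.
have [/existsP [j s_neq0] | /existsPn s0] := boolP [exists j, \sum_i f i j != 0].
  by right; exists j; rewrite (mulIf s_neq0 (sum_eig j)) addrK.
left; apply/eqP; rewrite -addr_eq0; apply: contraNT v_neq0 => znu.
apply/eqP/rowP => a; rewrite !mxE; apply/eqP.
have := eig (enum_val a).1 (enum_val a).2; rewrite (eqP (negbNE (s0 _))) mulr0.
by move/esym/eqP; rewrite mulf_eq0 (negbTE znu).
Qed.

End MeanFieldMatrix.

Lemma map_meanfield_mx (K L : fieldType) n m (phi : {rmorphism K -> L})
    (mu : 'I_m -> K) (nu : K) :
  map_mx phi (meanfield_mx n mu nu) = meanfield_mx n (phi \o mu) (phi nu).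
Proof. by apply/matrixP => a b; rewrite !mxE rmorphM rmorphB fmorph_div rmorphM !rmorph_nat. Qed.


Section InnerProduct.
Variables (R : realType) (d : nat).
Implicit Types (x y z : 'rV[R]_d).

Lemma dotvDl x y z : dotv (x + y) z = dotv x z + dotv y z.
Proof. by rewrite /dotv mulmxDl mxE. Qed.

Lemma dotvZl a x z : dotv (a *: x) z = a * dotv x z.
Proof. by rewrite /dotv -scalemxAl mxE. Qed.

Lemma dotvC x y : dotv x y = dotv y x.
Proof. by rewrite /dotv -[y *m _]trmxK trmx_mul trmxK [RHS]mxE. Qed.

Lemma dotvDr x y z : dotv z (x + y) = dotv z x + dotv z y.
Proof. by rewrite dotvC dotvDl !(dotvC z). Qed.

Lemma dotvZr a x z : dotv z (a *: x) = a * dotv z x.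
Proof. by rewrite dotvC dotvZl dotvC. Qed.

Lemma VappD (V : 'M[R]_d) x y : Vapp V (x + y) = Vapp V x + Vapp V y.
Proof. by rewrite /Vapp mulmxDl. Qed.

Lemma VappZ (V : 'M[R]_d) a x : Vapp V (a *: x) = a *: Vapp V x.
Proof. by rewrite /Vapp scalemxAl. Qed.

End InnerProduct.

Lemma attn_field_const_eigen (R : realType) (n d : nat) (beta : R) (V : 'M[R]_d)
    (x : 'rV[R]_d) (l : R) :
  dotv x x = 1 -> Vapp V x = l *: x -> attn_field beta V (\matrix_(i < n) x) = 0.
Proof.
move=> x_unit Vx; apply/row_matrixP => i; rewrite row0 rowK !rowK.
under eq_bigr do rewrite rowK Vx scalerA.
by rewrite -scaler_suml scalerA /projT !dotvZr !x_unit !mulr1 subrr.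
Qed.

Lemma derive1_id_mul_at0 (R : realType) (f g : R -> R) :
  (forall t, f t = t * g t) -> {for 0, continuous g} -> derive1 f 0 = g 0.
Proof.
move=> fE g_cont; rewrite /derive1; apply: cvg_lim; first exact: norm_hausdorff.
have g_cvg : g @ 0^' --> g 0.
  by apply: cvg_trans g_cont; apply: cvg_app; exact: cvg_within.
apply: cvg_trans g_cvg; apply: near_eq_cvg; near=> h.
have h_neq0 : h != 0 by near: h; exact: nbhs_dnbhs_neq.
by rewrite /= !fE addr0 mul0r subr0 -[_ *: _]/(_ * _) mulKf.
Unshelve. all: by end_near.
Qed.

Lemma continuous_sumr (T : topologicalType) (R : realType) (I : finType)
    (f : I -> T -> R) (x : T) :
  (forall i, {for x, continuous (f i)}) -> {for x, continuous (fun t => \sum_i f i t)}.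
Proof. by move=> f_cont; apply: (cvg_big add_continuous) => // i _; exact: f_cont. Qed.

Section CoordinateLine.
Variables (R : realType) (n d : nat) (beta : R) (V : 'M[R]_d).
Variables (e : 'I_d -> 'rV[R]_d) (lam : 'I_d -> R) (p : 'I_d).
Hypothesis e_orthonormal : forall k l, dotv (e k) (e l) = (k == l)%:R.
Hypothesis e_eigen : forall k, Vapp V (e k) = lam k *: e k.
Variables (i0 : 'I_n) (j0 : 'I_d.-1).
Local Notation k := (lift p j0).

Let k_neq_p : k != p. Proof. by rewrite eq_sym neq_lift. Qed.

Definition planev (a b : R) := a *: e p + b *: e k.

Lemma dotv_planev a b a' b' : dotv (planev a b) (planev a' b') = a * a' + b * b'.
Proof.
rewrite /planev !dotvDl !dotvDr !dotvZl !dotvZr !e_orthonormal !eqxx.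
by rewrite (negbTE k_neq_p) eq_sym (negbTE k_neq_p) /=; ring.
Qed.

Lemma dotv_planev_p a b : dotv (planev a b) (e p) = a.
Proof. by rewrite /planev !dotvDl !dotvZl !e_orthonormal eqxx (negbTE k_neq_p) /=; ring. Qed.

Lemma dotv_planev_lift a b j : dotv (planev a b) (e (lift p j)) = b * (j0 == j)%:R.
Proof.
rewrite /planev !dotvDl !dotvZl !e_orthonormal (negbTE (neq_lift p j)) (inj_eq lift_inj) /=.
by ring.
Qed.

Lemma Vapp_planev a b : Vapp V (planev a b) = planev (lam p * a) (lam k * b).
Proof. by rewrite /planev VappD !VappZ !e_eigen !scalerA ![lam _ * _]mulrC. Qed.

Lemma scale_planev c a b : c *: planev a b = planev (c * a) (c * b).
Proof. by rewrite /planev scalerDr !scalerA. Qed.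

Lemma sum_planev (I : finType) (a b : I -> R) :
  \sum_i planev (a i) (b i) = planev (\sum_i a i) (\sum_i b i).
Proof. by rewrite /planev big_split /= !scaler_suml. Qed.

Lemma projT_planev a b a' b' : projT (planev a b) (planev a' b') =
  planev (a' - (a * a' + b * b') * a) (b' - (a * a' + b * b') * b).
Proof. by rewrite /projT dotv_planev scale_planev /planev !scalerBl opprD addrACA. Qed.

Definition invnorm (t : R) := (Num.sqrt (1 + t ^+ 2))^-1.
Definition line_p t (i : 'I_n) := if i == i0 then invnorm t else 1.
Definition line_k t (i : 'I_n) := if i == i0 then invnorm t * t else 0.

Lemma row_chart_line t i :
  row i (chart_pt e p (fun i' j' => if (i', j') == (i0, j0) then t else 0)) =
  planev (line_p t i) (line_k t i).
Proof.
rewrite rowK /=.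
have -> : \sum_j (if (i, j) == (i0, j0) then t else 0) *: e (lift p j) =
          (if i == i0 then t else 0) *: e k.
  rewrite (bigD1 j0) //= big1 ?addr0 => [|j /negbTE jj0]; last first.
    by rewrite xpair_eqE jj0 andbF scale0r.
  by rewrite xpair_eqE eqxx andbT.
rewrite -[e p]scale1r -/(planev _ _) dotv_planev scale_planev /line_p /line_k.
case: (i == i0); first by rewrite /invnorm mulr1 mul1r expr2.
by rewrite !mulr0 addr0 !mulr1 sqrtr1 invr1.
Qed.

Definition weight t i j :=
  expR (beta * (line_p t i * (lam p * line_p t j) + line_k t i * (lam k * line_k t j))).
Definition partition t i := \sum_j weight t i j.
Definition mean_p t i := (partition t i)^-1 * \sum_j weight t i j * (lam p * line_p t j).

Definition slope (c t : R) i := c *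
  ((partition t i)^-1 * weight t i i0 * lam k * invnorm t * line_p t i -
   invnorm t * (i == i0)%:R * mean_p t i) / line_p t i ^+ 2.

Lemma chart_field_line t i j :
  chart_field beta V e p (fun i' j' => if (i', j') == (i0, j0) then t else 0) (i, j) =
  t * slope (j0 == j)%:R t i.
Proof.
rewrite /chart_field /= /attn_field rowK !row_chart_line.
set X := chart_pt _ _ _.
have rowX i' : row i' X = planev (line_p t i') (line_k t i') by exact: row_chart_line.
have -> : Zpart beta V X i = partition t i.
  by apply: eq_bigr => i' _; rewrite !rowX Vapp_planev dotv_planev.
under eq_bigr => i' _ do rewrite !rowX Vapp_planev dotv_planev scale_planev -/(weight t i i').
rewrite sum_planev.
have -> : \sum_i' weight t i i' * (lam k * line_k t i') =
          weight t i i0 * (lam k * (invnorm t * t)).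
  rewrite (bigD1 i0) //= big1 ?addr0 /line_k ?eqxx // => i' /negbTE ->.
  by rewrite !mulr0.
rewrite scale_planev projT_planev !dotv_planev_p !dotv_planev_lift.
rewrite /slope /mean_p /line_k; case: (i == i0) => /=; ring.
Qed.

Lemma invnorm0 : invnorm 0 = 1.
Proof. by rewrite /invnorm expr0n addr0 sqrtr1 invr1. Qed.

Lemma line_p0 i : line_p 0 i = 1.
Proof. by rewrite /line_p invnorm0; case: ifP. Qed.

Lemma line_k0 i : line_k 0 i = 0.
Proof. by rewrite /line_k mulr0; case: ifP. Qed.

Lemma weight0 i j : weight 0 i j = expR (beta * lam p).
Proof. by rewrite /weight !line_p0 !line_k0 mul0r mulr1 mul1r addr0. Qed.

Let n_neq0 : n%:R != 0 :> R.
Proof. by rewrite pnatr_eq0 -lt0n (leq_ltn_trans (leq0n i0) (ltn_ord i0)). Qed.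

Let expR_neq0 : expR (beta * lam p) != 0.
Proof. exact/lt0r_neq0/expR_gt0. Qed.

Lemma partition0 i : partition 0 i = n%:R * expR (beta * lam p).
Proof. by rewrite /partition (eq_bigr _ (fun j _ => weight0 i j)) sumr_const card_ord mulr_natl. Qed.

Lemma mean_p0 i : mean_p 0 i = lam p.
Proof.
rewrite /mean_p partition0.
under eq_bigr do rewrite weight0 line_p0 mulr1.
rewrite sumr_const card_ord -mulr_natl.
by field; rewrite n_neq0 expR_neq0.
Qed.

Lemma slope0 c i : slope c 0 i = c * (lam k / n%:R - (i == i0)%:R * lam p).
Proof.
rewrite /slope partition0 weight0 invnorm0 line_p0 mean_p0.
by field; rewrite n_neq0 expR_neq0.
Qed.

Local Notation cont0 f := ({for (0 : R), continuous f}).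

Lemma cont0_invnorm : cont0 invnorm.
Proof.
apply: continuousV; first by rewrite expr0n addr0 sqrtr1 oner_neq0.
apply: continuous_comp; last exact: sqrt_continuous.
by apply: continuousD; [exact: cvg_cst | exact: exprn_continuous].
Qed.

Lemma cont0_line_p i : cont0 (line_p ^~ i).
Proof. by rewrite /line_p; case: (i == i0); [exact: cont0_invnorm | exact: cvg_cst]. Qed.

Lemma cont0_line_k i : cont0 (line_k ^~ i).
Proof.
rewrite /line_k; case: (i == i0); last exact: cvg_cst.
by apply: continuousM; [exact: cont0_invnorm | exact: cvg_id].
Qed.

Lemma cont0_weight i j : cont0 (fun t => weight t i j).
Proof.
apply: continuous_comp; last exact: continuous_expR.
apply: continuousM; first exact: cvg_cst.
apply: continuousD; apply: continuousM; try apply: continuousM;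
  by [exact: cvg_cst | exact: cont0_line_p | exact: cont0_line_k].
Qed.

Lemma cont0_partition_inv i : cont0 (fun t => (partition t i)^-1).
Proof.
apply: continuousV; first by rewrite partition0 mulf_neq0.
by apply: continuous_sumr => j; exact: cont0_weight.
Qed.

Lemma cont0_mean_p i : cont0 (fun t => mean_p t i).
Proof.
apply: continuousM; first exact: cont0_partition_inv.
apply: continuous_sumr => j; apply: continuousM; first exact: cont0_weight.
by apply: continuousM; [exact: cvg_cst | exact: cont0_line_p].
Qed.

Lemma cont0_slope c i : cont0 (fun t => slope c t i).
Proof.
apply: continuousM; last first.
  apply: continuousV; first by rewrite line_p0 expr1n oner_neq0.
  by apply: continuousM; exact: cont0_line_p.
apply: continuousM; first exact: cvg_cst.
apply: continuousB; repeat first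
  [ exact: cvg_cst | exact: cont0_partition_inv | exact: cont0_weight
  | exact: cont0_invnorm | exact: cont0_line_p | exact: cont0_mean_p
  | apply: continuousM ].
Qed.

Lemma linearization_line i j :
  derive1 (fun t => chart_field beta V e p
    (fun i' j' => if (i', j') == (i0, j0) then t else 0) (i, j)) 0 =
  (j0 == j)%:R * (lam k / n%:R - (i == i0)%:R * lam p).
Proof.
rewrite (derive1_id_mul_at0 (fun t => chart_field_line t i j)); last exact: cont0_slope.
by rewrite slope0.
Qed.

End CoordinateLine.

Lemma linearizationE (R : realType) (n d : nat) (beta : R) (V : 'M[R]_d)
    (e : 'I_d -> 'rV[R]_d) (lam : 'I_d -> R) (p : 'I_d) :
  (forall k l, dotv (e k) (e l) = (k == l)%:R) ->
  (forall k, Vapp V (e k) = lam k *: e k) ->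
  linearization n beta V e p = meanfield_mx n (fun j => lam (lift p j)) (lam p).
Proof.
move=> e_orthonormal e_eigen; apply/matrixP => a b; rewrite !mxE.
case: (enum_val b) => i0 j0; case: (enum_val a) => i j.
exact: linearization_line.
Qed.

Theorem proposition5p1 (R : realType) (n d : nat) (beta : R) (V : 'M[R]_d)
    (e : 'I_d -> 'rV[R]_d) (lam : 'I_d -> R) (p : 'I_d) :
  0 < beta ->
  (1 <= n)%N ->
  V^T = V ->
  (forall k l : 'I_d, dotv (e k) (e l) = (k == l)%:R) ->
  (forall k : 'I_d, Vapp V (e k) = lam k *: e k) ->
  attn_field beta V (Xstar n e p) = 0 /\
  ((0 < lam p /\ (forall k : 'I_d, k != p -> lam k < lam p)) ->
     lin_asymp_stable (linearization n beta V e p)) /\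
  (((1 < n)%N /\ (1 < d)%N /\ lam p < 0) \/ (exists k : 'I_d, k != p /\ lam p < lam k) ->
     lin_unstable (linearization n beta V e p)).
Proof.
move=> _ n_gt0 _ e_orthonormal e_eigen.
have n_neq0 : n%:R != 0 :> R[i] by rewrite pnatr_eq0 -lt0n.
rewrite /lin_asymp_stable /lin_unstable /cplx_eigenvalue (linearizationE n beta p e_orthonormal e_eigen).
rewrite [map_mx _ _](map_meanfield_mx _ (real_complex R)).
split; first by apply: (attn_field_const_eigen _ _ _ (e_eigen p)); rewrite e_orthonormal eqxx.
split.
  move=> [lam_p_gt0 lam_lt] z /(meanfield_eigenvalue n_neq0) [|[j]] -> /=.
    by rewrite oppr_lt0.
  by rewrite subr_lt0 lam_lt // eq_sym neq_lift.
case=> [[n_gt1 [d_gt1 lam_p_lt0]] | [k [k_neq_p lam_k_gt]]].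
  exists (- lam p)%:C%C; split; last by rewrite /= oppr_gt0.
  have j : 'I_d.-1 by exists 0%N; rewrite ltn_predRL.
  rewrite (rmorphN (real_complex R)).
  exact: (eigenvalue_meanfield_split _ _ j (i1 := Ordinal n_gt0) (i2 := Ordinal n_gt1)).
move: k_neq_p lam_k_gt; rewrite eq_sym => /unlift_some [j -> _] lam_k_gt.
exists (lam (lift p j) - lam p)%:C%C; split; last by rewrite /= subr_gt0.
rewrite rmorphB.
exact: eigenvalue_meanfield_sync.
Qed.
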